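(* Let $d\ge2$, let $\Omega\subset\mathbb R^d$ be a nonempty bounded open convex polytope, and let $E\subset\mathbb R^d$ carry a Borel probability measure $\mu$ such that $(E,\mu)$ is weakly incoming to $\Omega$. Let $x_0\in\overline\Omega$. Then there exist $r_0>0$, $\epsilon>0$, a measurable $F\subset E$ with $\mu(F)>0$ and $\theta\in\{\pm1\}$ such that for all $f\in F$, all $x\in B(x_0,r_0)\cap\Omega$ and all $t\in[0,\epsilon]$, $x+t\theta f\in\Omega$.
   Context: $\Omega=\{x\in\mathbb R^d:\ \ell_j(x)>b_j,\ j=1,\dots,m\}$ for linear forms $\ell_j$ and reals $b_j$. Define $\mathrm c(x)=0$ for $x\in\Omega$, $+\infty$ for $x\notin\overline\Omega$, $\#\{i:\ell_i(x)=b_i\}$ for $x\in\partial\Omega$. $(E,\mu)$ is weakly incoming to $\Omega$ if for every $x_0\in\partial\Omega$ there exist $\epsilon>0$, $\theta\in\{\pm1\}$ and a measurable $F\subset E$ with $\mu(F)>0$ such that $\mathrm c(x_0+\theta te)<\mathrm c(x_0)$ for all $t\in]0,\epsilon]$, $e\in F$. $B(x_0,r)$ is the open ball. *)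

From HB Require Import structures.
From mathcomp Require Import all_boot all_order all_algebra.
From mathcomp Require Import all_classical all_reals all_analysis.
Set Implicit Arguments. Unset Strict Implicit. Unset Printing Implicit Defensive.
Import Order.TTheory GRing.Theory Num.Theory.
Import numFieldNormedType.Exports.
Local Open Scope classical_set_scope.
Local Open Scope ring_scope.

Definition lform {R : realType} {d : nat} (a x : 'rV[R]_d) : R :=
  \sum_(i < d) a ord0 i * x ord0 i.

Definition polyOmega {R : realType} {d m : nat}
    (a : 'I_m -> 'rV[R]_d) (b : 'I_m -> R) : set 'rV[R]_d :=
  [set x | forall j : 'I_m, b j < lform (a j) x].

Definition cfun {R : realType} {d m : nat}
    (a : 'I_m -> 'rV[R]_d) (b : 'I_m -> R) (x : 'rV[R]_d) : \bar R :=
  if `[< polyOmega a b x >] then 0%E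
  else if `[< closure (polyOmega a b) x >] then
    (#|[pred i : 'I_m | lform (a i) x == b i]|%:R)%:E
  else +oo%E.

Definition borelRd (R : realType) (d : nat) :=
  g_sigma_algebraType (@open 'rV[R]_d).

Definition eball {R : realType} {d : nat} (x0 : 'rV[R]_d) (r : R) : set 'rV[R]_d :=
  [set y | \sum_(i < d) (y ord0 i - x0 ord0 i) ^+ 2 < r ^+ 2].

Definition weakly_incoming {R : realType} {d m : nat}
    (E : set 'rV[R]_d) (mu : probability (borelRd R d) R)
    (a : 'I_m -> 'rV[R]_d) (b : 'I_m -> R) : Prop :=
  forall x0 : 'rV[R]_d,
    (closure (polyOmega a b) `\` polyOmega a b) x0 ->
    exists (eps : R) (theta : R) (F : set (borelRd R d)),
      [/\ 0 < eps, (theta = 1 \/ theta = -1),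
          [/\ measurable F, F `<=` E & (0 < mu F)%E] &
          forall t (e : 'rV[R]_d), 0 < t <= eps -> F e ->
            (cfun a b (x0 + (theta * t) *: e) < cfun a b x0)%E].

From HB Require Import structures.
From mathcomp Require Import all_boot all_order all_algebra.
From mathcomp Require Import all_classical all_reals all_analysis.
From mathcomp Require Import lra.
Set Implicit Arguments.
Unset Strict Implicit.

Import Order.TTheory GRing.Theory Num.Theory.
Import numFieldNormedType.Exports.
Local Open Scope classical_set_scope.
Local Open Scope ring_scope.

(* Write g_j = l_j(x0) - b_j >= 0 for the gaps at x0 in the closure.  It suffices to find
   eps > 0, a sign theta and a set F of positive measure such that x0 + eps theta f lies
   in the closed polytope for every f in F: then for x in Omega close to x0 and
   t <= eps/2, a constraint with g_j = 0 is not decreased along theta f, while one with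
   g_j > 0 loses at most g_j/2 along the segment and had at least g_j/2 to spare at x.
   On the boundary such F comes from weak incomingness, since c(x0 + eps theta f) < c(x0)
   is finite.  In the interior every f satisfies l_j(f) >= -(n+1) g_j for all j once n is
   large, so these countably many measurable sets cover E and one of them has positive
   measure. *)

Lemma measure_cover_gt0 d (T : measurableType d) (R : realType)
    (mu : {measure set T -> \bar R}) (E : set T) (F : (set T)^nat) :
  measurable E -> mu E != 0%E -> (forall n, measurable (F n)) ->
  E `<=` \bigcup_n F n -> exists n, (0 < mu (F n))%E.
Proof.
move=> mE muE0 mF EF; apply/not_existsP => muF0; move/eqP: muE0; apply.
apply/(negligibleP _ mE)/(negligibleS EF)/negligible_bigcup => n.
apply/(negligibleP _ (mF n))/eqP; rewrite eq_le measure_ge0 andbT leNgt.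
exact/negP/muF0.
Qed.

Lemma exists_natmul_lower_bound (R : realType) (m : nat) (g y : 'I_m -> R) :
  (forall j, 0 < g j) -> exists n : nat, forall j, - (n.+1%:R * g j) <= y j.
Proof.
move=> g0; pose S := \sum_(j < m) `|y j| / g j.
exists (Num.truncn S) => j.
have yjS : `|y j| / g j <= S.
  rewrite /S (bigD1 j) //= lerDl; apply: sumr_ge0 => i _.
  by rewrite divr_ge0 // ltW.
have := le_lt_trans yjS (truncnS_gt S); rewrite ltr_pdivrMr // mulrC => ylt.
have : - y j <= `|y j| by rewrite -normrN ler_norm.
lra.
Qed.

Section polytope.
Variables (R : realType) (d m : nat).
Implicit Types (a : 'I_m -> 'rV[R]_d) (b : 'I_m -> R).

Definition polyOmega_le a b : set 'rV[R]_d :=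
  [set x | forall j, b j <= lform (a j) x].

Lemma lformDZ (c x y : 'rV[R]_d) (k : R) :
  lform c (x + k *: y) = lform c x + k * lform c y.
Proof.
rewrite /lform mulr_sumr -big_split /=; apply: eq_bigr => i _.
by rewrite !mxE mulrDr mulrCA.
Qed.

Lemma continuous_lform (c : 'rV[R]_d) : continuous (lform c).
Proof.
rewrite /lform; elim: (index_enum _) => [|i s IH] x.
  by under eq_fun do rewrite big_nil; exact: cst_continuous.
under eq_fun do rewrite big_cons.
apply: (@continuousD _ _ _ (fun x : 'rV[R]_d => c ord0 i * x ord0 i)); last exact: IH.
apply: (@continuousM _ _ (fun _ => c ord0 i) (fun x : 'rV[R]_d => x ord0 i)).
  exact: cst_continuous.
exact: coord_continuous.
Qed.

Lemma closed_polyOmega_le a b : closed (polyOmega_le a b).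
Proof.
have -> : polyOmega_le a b = \bigcap_(j in setT) (lform (a j) @^-1` [set y | b j <= y]).
  by apply/seteqP; split => x /= H j => [_|]; exact: H.
apply: closed_bigI => j _; apply: preimage_closed; last exact: closed_ge.
by move=> x _; exact: continuous_lform.
Qed.

Lemma closure_polyOmega_sub a b : closure (polyOmega a b) `<=` polyOmega_le a b.
Proof.
rewrite [X in _ `<=` X](closure_id _).1; last exact: closed_polyOmega_le.
by apply: closureS => x Ox j; exact/ltW.
Qed.

Lemma measurable_closed (C : set 'rV[R]_d) :
  closed C -> measurable (C : set (borelRd R d)).
Proof.
move=> cC; rewrite -[C]setCK; apply: measurableC.
by apply: sub_sigma_algebra; exact: closed_openC.
Qed.

Lemma near_polyOmega_midpoint a b (x0 : 'rV[R]_d) :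
  \forall x \near x0, forall j, b j < lform (a j) x0 ->
    (lform (a j) x0 + b j) / 2 < lform (a j) x.
Proof.
apply: (@filter_forall _ _ (fun j x => b j < lform (a j) x0 ->
  (lform (a j) x0 + b j) / 2 < lform (a j) x) (nbhs x0) _) => j.
have [lt_b|] := ltP (b j) (lform (a j) x0); last first.
  by move=> _; apply: nearW.
have mid_lt : (lform (a j) x0 + b j) / 2 < lform (a j) x0.
  by rewrite addrC; exact: (midf_lt lt_b).2.
by apply: filterS (cvgr_gt _ (@continuous_lform (a j) x0) _ mid_lt) => x.
Qed.

Lemma nbhs_eball (x0 : 'rV[R]_d) (P : set 'rV[R]_d) :
  (\forall x \near x0, P x) -> exists2 r, 0 < r & eball x0 r `<=` P.
Proof.
move=> /nbhs_ballP[r r0 rP]; exists r => // x x0x; apply: rP; split=> // i j.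
rewrite (ord1 i) /ball /= distrC.
have : `|x ord0 j - x0 ord0 j| ^+ 2 < r ^+ 2.
  rewrite real_normK ?num_real //; apply: le_lt_trans x0x.
  rewrite (bigD1 j) //= lerDl; apply: sumr_ge0 => k _; exact: sqr_ge0.
by rewrite ltr_pXn2r // ?nnegrE ?ltW.
Qed.

Lemma polyOmega_segment a b (x0 v x : 'rV[R]_d) (eps t : R) :
  polyOmega_le a b (x0 + eps *: v) ->
  (forall j, b j < lform (a j) x0 -> (lform (a j) x0 + b j) / 2 < lform (a j) x) ->
  polyOmega a b x -> 0 <= t <= eps / 2 -> polyOmega a b (x + t *: v).
Proof.
move=> x0v x_mid Ox /andP[t0 te] j; rewrite lformDZ.
have := x0v j; rewrite lformDZ => x0v_j.
have Ox_j := Ox j.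
have [v0|v_neg] := leP 0 (lform (a j) v).
  have : 0 <= t * lform (a j) v by rewrite mulr_ge0.
  lra.
have tv : eps * lform (a j) v / 2 <= t * lform (a j) v.
  by rewrite mulrAC ler_wnM2r // ltW.
have [gap|no_gap] := ltP (b j) (lform (a j) x0).
  have := x_mid j gap.
  lra.
lra.
Qed.

Definition incoming_at (E : set 'rV[R]_d) (mu : probability (borelRd R d) R)
    a b (x0 : 'rV[R]_d) : Prop :=
  exists (eps theta : R) (F : set (borelRd R d)),
    [/\ 0 < eps, (theta = 1 \/ theta = -1),
        [/\ measurable F, F `<=` E & (0 < mu F)%E] &
        forall f, F f -> polyOmega_le a b (x0 + eps *: (theta *: f))].

Variables (E : set 'rV[R]_d) (mu : probability (borelRd R d) R).

Lemma incoming_at_boundary a b (x0 : 'rV[R]_d) :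
  weakly_incoming E mu a b -> (closure (polyOmega a b) `\` polyOmega a b) x0 ->
  incoming_at E mu a b x0.
Proof.
move=> winc bx0; have [cx0 nOx0] := bx0.
have [eps [theta [F [eps0 htheta hF c_lt]]]] := winc x0 bx0.
exists eps, theta, F; split => // f Ff; rewrite scalerA mulrC.
apply: closure_polyOmega_sub.
move: (c_lt eps f); rewrite eps0 lexx => /(_ isT Ff).
rewrite /cfun (asboolF nOx0) (asboolT cx0).
case: (asboolP (polyOmega a b _)) => [Oy _|_]; first exact: subset_closure.
by case: (asboolP (closure _ _)).
Qed.

Lemma incoming_at_interior a b (x0 : 'rV[R]_d) :
  measurable (E : set (borelRd R d)) -> mu E = 1%E -> polyOmega a b x0 ->
  incoming_at E mu a b x0.
Proof.
move=> mE muE Ox0; pose g j := lform (a j) x0 - b j.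
have g0 j : 0 < g j by rewrite subr_gt0; exact: Ox0.
pose Fn (n : nat) : set (borelRd R d) :=
  E `&` polyOmega_le a (fun j => - (n.+1%:R * g j)).
have mFn n : measurable (Fn n).
  apply: measurableI => //; apply: measurable_closed; exact: closed_polyOmega_le.
have [n muFn] : exists n, (0 < mu (Fn n))%E.
  apply: (measure_cover_gt0 (mu := mu) (F := Fn) mE) => //.
  - by rewrite [X in X != _]muE.
  - move=> f Ef.
    have [n hn] := exists_natmul_lower_bound (fun j => lform (a j) f) g0.
    by exists n.
exists n.+1%:R^-1, 1, (Fn n); split => //; first by left.
  by split => // f [].
move=> f [_ Ff] j; rewrite scale1r lformDZ.
have N0 : 0 <= n.+1%:R^-1 :> R by rewrite invr_ge0.
have := ler_wpM2l N0 (Ff j).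
rewrite mulrN mulrA mulVf ?pnatr_eq0 // mul1r /g.
set s := _ * lform (a j) f; lra.
Qed.

End polytope.

Theorem corollary5p5 (R : realType) (d m : nat) (hd : (2 <= d)%N)
    (a : 'I_m -> 'rV[R]_d) (b : 'I_m -> R)
    (hne : polyOmega a b !=set0)
    (hbdd : exists M : R, forall x, polyOmega a b x -> `|x| <= M)
    (E : set 'rV[R]_d) (mu : probability (borelRd R d) R)
    (hE : measurable (E : set (borelRd R d))) (hmuE : mu E = 1%E)
    (hinc : weakly_incoming E mu a b)
    (x0 : 'rV[R]_d) (hx0 : closure (polyOmega a b) x0) :
  exists (r0 eps theta : R) (F : set (borelRd R d)),
    [/\ 0 < r0, 0 < eps, [/\ measurable F, F `<=` E & (0 < mu F)%E],
        (theta = 1 \/ theta = -1) &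
        forall (f x : 'rV[R]_d) (t : R),
          F f -> eball x0 r0 x -> polyOmega a b x -> 0 <= t <= eps ->
          polyOmega a b (x + (t * theta) *: f)].
Proof.
have [eps [theta [F [eps0 htheta hF Fdir]]]] : incoming_at E mu a b x0.
  have [Ox0|nOx0] := pselect (polyOmega a b x0).
    exact: incoming_at_interior.
  exact: incoming_at_boundary.
have [r0 r00 x0_mid] := nbhs_eball (near_polyOmega_midpoint a b x0).
exists r0, (eps / 2), theta, F; split => //; first by rewrite divr_gt0.
move=> f x t Ff x0x Ox ht; rewrite -scalerA.
exact: polyOmega_segment (Fdir f Ff) (x0_mid x x0x) Ox ht.
Qed.
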